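(* As operators on symmetric functions, $$[D(\alpha),E_2] =(\alpha-1)\sum_{i\geq1}(i-1)^2p_i\frac{\partial}{\partial p_{i-1}}+ \sum_{i,j\geq1}(i+j-1)p_ip_j\frac{\partial}{\partial p_{i+j-1}}+\alpha\sum_{i,j\geq1}ij\,p_{i+j+1}\frac{\partial}{\partial p_{i}}\frac{\partial}{\partial p_{j}},$$ where the $i=1$ term of the first sum is zero.
   Context: Symmetric functions are written in power sums $p_k$ in variables $x=(x_1,x_2,\dots)$. $D(\alpha) = \frac{\alpha}{2}\sum_{i}x_i^2\frac{\partial^2}{\partial x_i^2}+\sum_{i}\sum_{j\neq i}\frac{x_ix_j}{x_i-x_j}\frac{\partial}{\partial x_i}$ is the Laplace–Beltrami operator, and $E_2=\sum_{k\ge1}kp_{k+1}\frac{\partial}{\partial p_k}=\sum_i x_i^2\frac{\partial}{\partial x_i}$. $[A,B]=AB-BA$. *)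

From HB Require Import structures.
From mathcomp Require Import all_boot all_algebra.
From mathcomp Require Import fraction.
From mathcomp.multinomials Require Import mpoly.
Set Implicit Arguments. Unset Strict Implicit. Unset Printing Implicit Defensive.
Import GRing.Theory.
Local Open Scope ring_scope.

(* x-side: N variables x_0..x_{N-1}; we work in the field of rational functions
   Frac R N = Frac({mpoly R[N]}), since D(alpha) involves x_i x_j/(x_i-x_j).
   p-side: the ring of symmetric functions Lambda = R[p_1,p_2,...]; a symmetric
   function in p_1..p_n is an mpoly in n variables (variable k-1 <-> p_k).      *)

Notation "x %:F" := (@FracField.tofrac _ x).

Definition Frac (R : fieldType) (N : nat) := {fraction {mpoly R[N]}}.

Definition cF (R : fieldType) (N : nat) (a : R) : Frac R N := (a%:MP)%:F.
Arguments cF {R} N a.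
Definition xF (R : fieldType) (N : nat) (i : 'I_N) : Frac R N := ('X_i)%:F.
Arguments xF {R N} i.

Definition fderiv (R : fieldType) (N : nat) (i : 'I_N) (q : Frac R N) : Frac R N :=
  let r := repr q in
  ((mderiv i \n_r * \d_r - \n_r * mderiv i \d_r)%:F) / ((\d_r ^+ 2)%:F).
Arguments fderiv {R N} i q.

Definition E2x (R : fieldType) (N : nat) (q : Frac R N) : Frac R N :=
  \sum_(i < N) xF i ^+ 2 * fderiv i q.
Arguments E2x {R N} q.

Definition Dx (R : fieldType) (N : nat) (alpha : R) (q : Frac R N) : Frac R N :=
  cF N (alpha / 2) * (\sum_(i < N) xF i ^+ 2 * fderiv i (fderiv i q))
  + \sum_(i < N) \sum_(j < N | j != i)
       (xF i * xF j / (xF i - xF j)) * fderiv i q.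
Arguments Dx {R N} alpha q.

Definition commDE2 (R : fieldType) (N : nat) (alpha : R) (q : Frac R N) : Frac R N :=
  Dx alpha (E2x q) - E2x (Dx alpha q).
Arguments commDE2 {R N} alpha q.

(* power sum p_k as a variable of {mpoly R[M]} (k = 1..M); 0 outside this range *)
Definition pp (R : fieldType) (M : nat) (k : nat) : {mpoly R[M]} :=
  if k is k'.+1 then oapp (fun i : 'I_M => 'X_i) 0 (insub k') else 0.

(* d/dp_k on {mpoly R[M]} (k = 1..M); 0 outside this range *)
Definition dp (R : fieldType) (M : nat) (k : nat) (f : {mpoly R[M]}) : {mpoly R[M]} :=
  if k is k'.+1 then oapp (fun i : 'I_M => mderiv i f) 0 (insub k') else 0.
Arguments dp {R M} k f.

Definition emb (R : fieldType) (n M : nat) (f : {mpoly R[n]}) : {mpoly R[M]} :=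
  mmap (fun a : R => a%:MP) (fun i : 'I_n => pp R M i.+1) f.
Arguments emb {R n} M f.

Definition rho (R : fieldType) (M N : nat) (f : {mpoly R[M]}) : Frac R N :=
  mmap (fun a : R => cF N a) (fun k : 'I_M => \sum_(i < N) xF i ^+ k.+1) f.
Arguments rho {R M} N f.

Definition rhsOp (R : fieldType) (M : nat) (alpha : R) (f : {mpoly R[M]}) : {mpoly R[M]} :=
  (alpha - 1) *: (\sum_(1 <= i < M.+1) ((i - 1) ^ 2)%:R *: (pp R M i * dp (i - 1) f))
  + \sum_(1 <= i < M.+1) \sum_(1 <= j < M.+1)
       (i + j - 1)%:R *: (pp R M i * pp R M j * dp (i + j - 1) f)
  + alpha *: (\sum_(1 <= i < M.+1) \sum_(1 <= j < M.+1)
       (i * j)%:R *: (pp R M (i + j + 1) * dp i (dp j f))).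
Arguments rhsOp {R M} alpha f.

From HB Require Import structures.
From mathcomp Require Import all_boot all_algebra.
From mathcomp Require Import fraction generic_quotient.
From mathcomp.multinomials Require Import mpoly.
From mathcomp Require Import ring zify.
Import GRing.Theory.
Local Open Scope ring_scope.
Set Implicit Arguments. Unset Strict Implicit. Unset Printing Implicit Defensive.

(* Since E_2 annihilates the kernel
   x_i x_j / (x_i - x_j) and [d_i, E_2] = 2 x_i d_i, the commutator is
     [D(alpha), E_2] = alpha sum_i (x_i^2 d_i + x_i^3 d_i^2)
                       + 2 sum_(i <> j) x_i^2 x_j / (x_i - x_j) d_i.
   On a symmetric function the chain rule d_i = sum_k k x_i^(k-1) d/dp_k turns the first sum
   into alpha times the join term plus alpha (k+1)^2 p_(k+2) d/dp_(k+1).  Symmetrizing in i, j,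
     x_i^(k+2) x_j / (x_i - x_j) + x_j^(k+2) x_i / (x_j - x_i) = sum_(a + b = k+2, a, b >= 1) x_i^a x_j^b,
   and sum_(i <> j) x_i^a x_j^b = p_a p_b - p_(a+b), so the second sum is the cut term minus
   (k+1)^2 p_(k+2) d/dp_(k+1); this is where the coefficient alpha - 1 comes from. *)

Lemma fracE (A : idomainType) (q : {fraction A}) :
  q = (\n_(repr q))%:F / (\d_(repr q))%:F.
Proof.
have dF0 : (\d_(repr q))%:F != 0 by rewrite tofrac_eq0 denom_ratioP.
apply: (mulIf dF0); rewrite divfK // -{1}[q]reprK; unlock tofrac.
apply: (etrans (esym (FracField.pi_mul _ _))); apply/eqmodP.
by rewrite /= FracField.equivfE /FracField.mulf !numden_Ratio ?mulf_neq0 ?oner_neq0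
  ?denom_ratioP // !mulr1 mulrC.
Qed.

Lemma eq_quotient_rule (K : fieldType) (a a' b b' c c' d d' : K) :
  b != 0 -> d != 0 -> c * b = a * d -> c' * b + c * b' = a' * d + a * d' ->
  (c' * d - c * d') / d ^+ 2 = (a' * b - a * b') / b ^+ 2.
Proof.
move=> b0 d0 cross dcross.
have c'E : c' = (a' * d + a * d' - c * b') / b by rewrite -dcross; field.
have cE : c = a * d / b by rewrite -cross; field.
by rewrite c'E cE; field; rewrite b0 d0.
Qed.

Lemma quotient_ruleD (K : fieldType) (a a' b b' c c' d d' : K) : b != 0 -> d != 0 ->
  ((a' * d + a * d' + (c' * b + c * b')) * (b * d) - (a * d + c * b) * (b' * d + b * d'))
    / (b * d) ^+ 2
  = (a' * b - a * b') / b ^+ 2 + (c' * d - c * d') / d ^+ 2.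
Proof. by move=> b0 d0; field; rewrite b0 d0. Qed.

Lemma quotient_ruleM (K : fieldType) (a a' b b' c c' d d' : K) : b != 0 -> d != 0 ->
  ((a' * c + a * c') * (b * d) - a * c * (b' * d + b * d')) / (b * d) ^+ 2
  = (a' * b - a * b') / b ^+ 2 * (c / d) + a / b * ((c' * d - c * d') / d ^+ 2).
Proof. by move=> b0 d0; field; rewrite b0 d0. Qed.

Lemma sum_mul_eq (K : pzSemiRingType) (I : finType) (i : I) (G : I -> K) :
  \sum_j G j * (i == j)%:R = G i.
Proof.
rewrite (bigD1 i) //= eqxx mulr1 big1 ?addr0 // => j /negbTE.
by rewrite eq_sym => ->; rewrite mulr0.
Qed.

Section Derivation.
Variables (K : fieldType) (d : K -> K).
Hypothesis dM : forall p q, d (p * q) = d p * q + p * d q.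

Lemma derivation1 : d 1 = 0.
Proof.
have E := dM 1 1; rewrite !mulr1 mul1r in E.
by apply: (addrI (d 1)); rewrite addr0 -E.
Qed.

Lemma derivationXn (q : K) k : d (q ^+ k.+1) = k.+1%:R * q ^+ k * d q.
Proof.
elim: k => [|k IH]; first by rewrite expr1 expr0 mulr1 mul1r.
rewrite exprS dM IH (mulrS 1 k.+1) [q ^+ k.+1]exprS; ring.
Qed.

Lemma derivationV (q : K) : q != 0 -> d q^-1 = - d q / (q * q).
Proof.
move=> q0; have E : q * d q^-1 = - (d q / q).
  by apply/eqP; rewrite -addr_eq0 addrC -dM mulfV // derivation1.
by apply: (mulfI q0); rewrite E; field.
Qed.

End Derivation.

Section FracDerivative.
Variables (R : fieldType) (N : nat).
Local Notation F := (Frac R N).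
Local Notation P := {mpoly R[N]}.

Lemma fderiv_frac (i : 'I_N) (a b : P) : b != 0 ->
  fderiv i (a%:F / b%:F) = (a^`M(i) * b - a * b^`M(i))%:F / (b ^+ 2)%:F.
Proof.
move=> b0; rewrite /fderiv; set r := repr _.
have bF0 : (b%:F : F) != 0 by rewrite tofrac_eq0.
have dF0 : ((\d_r)%:F : F) != 0 by rewrite tofrac_eq0 denom_ratioP.
have cross : \n_r * b = a * \d_r.
  have E := fracE (a%:F / b%:F : F); rewrite -/r in E.
  by apply/eqP; rewrite -tofrac_eq !tofracM -(eqr_div _ _ dF0 bF0) E.
have dcross := congr1 (mderiv i) cross; rewrite !mderivM in dcross.
move: (congr1 (@tofrac _) cross) (congr1 (@tofrac _) dcross).
rewrite !(tofracXn, tofracB, tofracD, tofracM) => crossF dcrossF.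
exact: eq_quotient_rule bF0 dF0 crossF dcrossF.
Qed.

Lemma fderiv_tofrac (i : 'I_N) (a : P) : fderiv i a%:F = (a^`M(i))%:F.
Proof.
have := fderiv_frac i a (oner_neq0 P); rewrite tofrac1 divr1 => ->.
by rewrite mderivC expr1n mulr1 mulr0 subr0 tofrac1 divr1.
Qed.

Lemma frac_decomp (q : F) : exists a b : P, b != 0 /\ q = a%:F / b%:F.
Proof. by exists \n_(repr q), \d_(repr q); split; [exact: denom_ratioP | exact: fracE]. Qed.

Lemma fderivD (i : 'I_N) (p q : F) : fderiv i (p + q) = fderiv i p + fderiv i q.
Proof.
have [a [b [b0 ->]]] := frac_decomp p; have [c [d [d0 ->]]] := frac_decomp q.
have bF0 : (b%:F : F) != 0 by rewrite tofrac_eq0.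
have dF0 : (d%:F : F) != 0 by rewrite tofrac_eq0.
have -> : a%:F / b%:F + c%:F / d%:F = (a * d + c * b)%:F / (b * d)%:F :> F.
  by rewrite (addf_div _ _ bF0 dF0) tofracD !tofracM.
rewrite !fderiv_frac ?mulf_neq0 // !(mderivD, mderivM) !(tofracXn, tofracB, tofracD, tofracM).
exact: quotient_ruleD bF0 dF0.
Qed.

Lemma fderivM (i : 'I_N) (p q : F) : fderiv i (p * q) = fderiv i p * q + p * fderiv i q.
Proof.
have [a [b [b0 ->]]] := frac_decomp p; have [c [d [d0 ->]]] := frac_decomp q.
have bF0 : (b%:F : F) != 0 by rewrite tofrac_eq0.
have dF0 : (d%:F : F) != 0 by rewrite tofrac_eq0.
have -> : a%:F / b%:F * (c%:F / d%:F) = (a * c)%:F / (b * d)%:F :> F.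
  by rewrite mulf_div !tofracM.
rewrite !fderiv_frac ?mulf_neq0 // !mderivM !(tofracXn, tofracB, tofracD, tofracM).
exact: quotient_ruleM bF0 dF0.
Qed.

Lemma fderivB (i : 'I_N) (p q : F) : fderiv i (p - q) = fderiv i p - fderiv i q.
Proof. by apply/eqP; rewrite eq_sym subr_eq -fderivD subrK. Qed.

HB.instance Definition _ (i : 'I_N) :=
  GRing.isZmodMorphism.Build F F (fderiv i) (@fderivB i).

Lemma fderiv_comm (i j : 'I_N) (q : F) : fderiv i (fderiv j q) = fderiv j (fderiv i q).
Proof.
have [a [b [b0 ->]]] := frac_decomp q.
rewrite !fderiv_frac ?expf_neq0 // !(mderivB, mderivM) (mderiv_comm j i a) (mderiv_comm j i b).
by congr (_%:F / _); ring.
Qed.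

End FracDerivative.

Lemma mderivXU (K : nzRingType) (n : nat) (j k : 'I_n) :
  ('X_j : {mpoly K[n]})^`M(k) = (j == k)%:R.
Proof.
rewrite mderivX mnm1E; case: eqP => [->|_]; last by rewrite scale0r.
by rewrite -[X in (X - _)%MM]add0m addmK mpolyX0 scale1r.
Qed.

Section EulerOperator.
Variables (R : fieldType) (N : nat).
Local Notation F := (Frac R N).

Lemma fderiv_cF (i : 'I_N) (a : R) : fderiv i (cF N a) = 0.
Proof. by rewrite /cF fderiv_tofrac mderivC tofrac0. Qed.

Lemma fderiv_cFM (i : 'I_N) (a : R) (q : F) : fderiv i (cF N a * q) = cF N a * fderiv i q.
Proof. by rewrite fderivM fderiv_cF mul0r add0r. Qed.

Lemma fderiv_nat (i : 'I_N) k : fderiv i (k%:R : F) = 0.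
Proof. by rewrite raddfMn /= (derivation1 (@fderivM _ _ i)) mul0rn. Qed.

Lemma fderiv_xF (i j : 'I_N) : fderiv i (xF j : F) = (j == i)%:R.
Proof.
by rewrite /xF fderiv_tofrac mderivXU rmorph_nat.
Qed.

Lemma fderivXn (i : 'I_N) (q : F) k : fderiv i (q ^+ k.+1) = k.+1%:R * q ^+ k * fderiv i q.
Proof. exact: (derivationXn (@fderivM _ _ i) q k). Qed.

Lemma xF_fderiv_pow (i : 'I_N) k : xF i * fderiv i (xF i ^+ k : F) = k%:R * xF i ^+ k.
Proof.
case: k => [|k]; first by rewrite expr0 (derivation1 (@fderivM _ _ i)) mulr0 mul0r.
by rewrite fderivXn fderiv_xF eqxx mulr1 mulrCA -exprS.
Qed.

Lemma E2xB (p q : F) : E2x (p - q) = E2x p - E2x q.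
Proof. by rewrite /E2x -sumrB; apply: eq_bigr => l _; rewrite fderivB mulrBr. Qed.

HB.instance Definition _ := GRing.isZmodMorphism.Build F F E2x E2xB.

Lemma E2xM (p q : F) : E2x (p * q) = E2x p * q + p * E2x q.
Proof.
rewrite /E2x mulr_suml mulr_sumr -big_split; apply: eq_bigr => l _ /=.
by rewrite fderivM mulrDr; congr (_ + _); [exact: mulrA | exact: mulrCA].
Qed.

Lemma E2x_cFM (a : R) (q : F) : E2x (cF N a * q) = cF N a * E2x q.
Proof. by rewrite /E2x mulr_sumr; apply: eq_bigr => l _; rewrite fderiv_cFM mulrCA. Qed.

Lemma E2x_xF (i : 'I_N) : E2x (xF i : F) = xF i ^+ 2.
Proof. by rewrite /E2x; under eq_bigr do rewrite fderiv_xF; rewrite sum_mul_eq. Qed.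

Lemma xF_sub_neq0 (i j : 'I_N) : i != j -> (xF i - xF j : F) != 0.
Proof.
move=> ij; rewrite /xF -tofracB tofrac_eq0; apply/eqP => /(congr1 (mcoeff U_(i))).
rewrite mcoeffB !mcoeffXU eqxx eq_sym (negbTE ij) subr0 mcoeff0 => /eqP.
by rewrite oner_eq0.
Qed.

Lemma E2x_kernel (i j : 'I_N) : i != j -> E2x (xF i * xF j / (xF i - xF j) : F) = 0.
Proof.
move=> ij; have ij0 := xF_sub_neq0 ij.
rewrite !E2xM (derivationV E2xM ij0) E2xB !E2x_xF.
(* [field] on [Frac R N] would reflect through [tofrac] into {mpoly} arithmetic, which is
   prohibitively slow: hence the abstract field here, and [xF i] generalized before [ring] below. *)
have kernel_id (K : fieldType) (a b : K) : a - b != 0 ->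
    (a ^+ 2 * b + a * b ^+ 2) / (a - b) + a * b * (- (a ^+ 2 - b ^+ 2) / ((a - b) * (a - b))) = 0.
  by move=> ab0; field; rewrite ab0.
exact: kernel_id.
Qed.

Lemma fderiv_E2x (i : 'I_N) (q : F) :
  fderiv i (E2x q) = 2 * xF i * fderiv i q + E2x (fderiv i q).
Proof.
rewrite {1}/E2x raddf_sum /= /E2x -[2 * _ * _](sum_mul_eq i (fun l => 2 * xF l * fderiv l q)).
rewrite -big_split; apply: eq_bigr => l _ /=.
rewrite fderivM (fderivXn i (xF l) 1) fderiv_xF fderiv_comm expr1.
by rewrite (eq_sym l i) mulrAC.
Qed.

Lemma commE2_second_order (q : F) :
  \sum_(i < N) xF i ^+ 2 * fderiv i (fderiv i (E2x q))
  - E2x (\sum_(i < N) xF i ^+ 2 * fderiv i (fderiv i q))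
  = 2 * \sum_(i < N) (xF i ^+ 2 * fderiv i q + xF i ^+ 3 * fderiv i (fderiv i q)).
Proof.
rewrite (raddf_sum (@E2x R N)) -sumrB mulr_sumr; apply: eq_bigr => i _.
rewrite fderiv_E2x raddfD /= fderiv_E2x (fderivM i (2 * xF i)) (fderivM i 2).
rewrite fderiv_nat fderiv_xF eqxx /= E2xM (derivationXn E2xM) E2x_xF.
by move: (xF i) => x; ring.
Qed.

Lemma commE2_first_order (q : F) :
  \sum_(i < N) \sum_(j < N | j != i) xF i * xF j / (xF i - xF j) * fderiv i (E2x q)
  - E2x (\sum_(i < N) \sum_(j < N | j != i) xF i * xF j / (xF i - xF j) * fderiv i q)
  = 2 * \sum_(i < N) \sum_(j < N | j != i) xF i * (xF i * xF j / (xF i - xF j)) * fderiv i q.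
Proof.
rewrite (raddf_sum (@E2x R N)) -sumrB mulr_sumr; apply: eq_bigr => i _.
rewrite (raddf_sum (@E2x R N)) -sumrB mulr_sumr; apply: eq_bigr => j ji.
rewrite /= fderiv_E2x E2xM E2x_kernel 1?eq_sym //.
by move: (xF i * xF j / _) => w; move: (xF i) => x; ring.
Qed.

Lemma commDE2E (alpha : R) (q : F) :
  commDE2 alpha q =
  cF N (alpha / 2) * (2 * \sum_(i < N) (xF i ^+ 2 * fderiv i q + xF i ^+ 3 * fderiv i (fderiv i q)))
  + 2 * \sum_(i < N) \sum_(j < N | j != i) xF i * (xF i * xF j / (xF i - xF j)) * fderiv i q.
Proof.
rewrite /commDE2 /Dx raddfD /= E2x_cFM -commE2_second_order -commE2_first_order.
by rewrite opprD addrACA -mulrBr.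
Qed.

End EulerOperator.

Lemma mpoly_ind_ring (K : comNzRingType) (n : nat) (Q : {mpoly K[n]} -> Prop) :
  (forall c, Q c%:MP) -> (forall i, Q 'X_i) ->
  (forall p q, Q p -> Q q -> Q (p + q)) -> (forall p q, Q p -> Q q -> Q (p * q)) ->
  forall p, Q p.
Proof.
move=> QC QX QD QM p; elim/mpolyind: p => [|c m p _ _ Qp]; first by rewrite -mpolyC0.
apply: (QD) => //; rewrite -mul_mpolyC; apply: (QM) => //.
rewrite mpolyXE_id; apply: (big_ind Q); [by rewrite -mpolyC1 | exact: (QM) | ].
move=> i _; elim: (m i) => [|k IH]; first by rewrite expr0 -mpolyC1.
by rewrite exprS; apply: (QM).
Qed.

Section Truncation.
Variables (R : fieldType) (M : nat).

Lemma dpE (k : 'I_M) (h : {mpoly R[M]}) : dp k.+1 h = h^`M(k).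
Proof. by rewrite /dp valK. Qed.

Lemma dp_ge k (h : {mpoly R[M]}) : (M <= k)%N -> dp k.+1 h = 0.
Proof. by move=> kM; rewrite /dp insubN // -leqNgt. Qed.

Lemma dp0 k : dp k (0 : {mpoly R[M]}) = 0.
Proof. by case: k => [|k] //=; case: (insub k) => //= a; rewrite mderiv0. Qed.

Lemma dp_comm a b (h : {mpoly R[M]}) : dp a (dp b h) = dp b (dp a h).
Proof.
case: a => [|a]; first by rewrite dp0.
case: b => [|b]; first by rewrite dp0.
rewrite /dp; case: (insub a) => [u|] /=; case: (insub b) => [v|] //=.
- by rewrite mderiv_comm.
- by rewrite mderiv0.
- by rewrite mderiv0.
Qed.

Lemma ppE (k : 'I_M) : pp R M k.+1 = 'X_k.
Proof. by rewrite /pp valK. Qed.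

Lemma pp_ge k : (M <= k)%N -> pp R M k.+1 = 0.
Proof. by move=> kM; rewrite /pp insubN // -leqNgt. Qed.

HB.instance Definition _ (n : nat) := GRing.RMorphism.copy (@emb R n M)
  (mmap (@mpolyC M R) (fun i : 'I_n => pp R M i.+1)).

Lemma mderiv_emb_ge n (f : {mpoly R[n]}) (k : 'I_M) : (n <= k)%N -> (emb M f)^`M(k) = 0.
Proof.
move=> nk; elim/mpoly_ind_ring: f => [c|i|p q Hp Hq|p q Hp Hq].
- by rewrite /emb mmapC mderivC.
- rewrite /emb mmapX mmap1U; case: (ltnP i M) => iM; last by rewrite pp_ge // mderiv0.
  rewrite -[i : nat]/(val (Ordinal iM)) ppE mderivXU.
  suff /negbTE -> : Ordinal iM != k by [].
  by rewrite -val_eqE /= neq_ltn (leq_trans (ltn_ord i) nk).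
- by rewrite rmorphD mderivD Hp Hq addr0.
- by rewrite rmorphM mderivM Hp Hq mulr0 mul0r addr0.
Qed.

Lemma dp_emb_ge n (f : {mpoly R[n]}) k : (n <= k)%N -> dp k.+1 (emb M f) = 0.
Proof.
move=> nk; case: (ltnP k M) => kM; last by rewrite dp_ge.
by rewrite -[k]/(val (Ordinal kM)) dpE mderiv_emb_ge.
Qed.

End Truncation.

Section Specialization.
Variables (R : fieldType) (N M : nat).
Local Notation F := (Frac R N).

HB.instance Definition _ := GRing.RMorphism.copy (@cF R N) (@tofrac _ \o @mpolyC N R).

Definition psum (m : nat) : F := \sum_(i < N) xF i ^+ m.

HB.instance Definition _ := GRing.RMorphism.copy (rho N : {mpoly R[M]} -> F)
  (mmap (@cF R N) (fun k : 'I_M => psum k.+1)).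

Lemma rhoX (k : 'I_M) : rho N ('X_k : {mpoly R[M]}) = psum k.+1.
Proof. by rewrite /rho mmapX mmap1U. Qed.

Lemma rhoZ (c : R) (p : {mpoly R[M]}) : rho N (c *: p) = cF N c * rho N p.
Proof. by rewrite -mul_mpolyC rmorphM /= /rho mmapC. Qed.

Lemma fderiv_psum (i : 'I_N) m : fderiv i (psum m.+1) = m.+1%:R * xF i ^+ m.
Proof.
rewrite /psum raddf_sum /=; under eq_bigr do rewrite fderivXn fderiv_xF.
by rewrite -(sum_mul_eq i (fun l => m.+1%:R * xF l ^+ m)); apply: eq_bigr => l _; rewrite eq_sym.
Qed.

Lemma fderiv_rho_chain (g : {mpoly R[M]}) (i : 'I_N) :
  fderiv i (rho N g) = \sum_(k < M) rho N (g^`M(k)) * fderiv i (rho N ('X_k : {mpoly R[M]})).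
Proof.
elim/mpoly_ind_ring: g => [c|j|p q IHp IHq|p q IHp IHq].
- rewrite /rho mmapC fderiv_cF big1 // => k _.
  by rewrite mderivC rmorph0 mul0r.
- rewrite -[LHS](sum_mul_eq j (fun k => fderiv i (rho N ('X_k : {mpoly R[M]})))).
  apply: eq_bigr => k _; rewrite mderivXU mulrC.
  by case: (j == k); rewrite ?rmorph1 ?rmorph0.
- rewrite rmorphD raddfD /= IHp IHq -big_split; apply: eq_bigr => k _ /=.
  by rewrite mderivD rmorphD mulrDl.
- rewrite rmorphM fderivM /= IHp IHq mulr_suml mulr_sumr -big_split.
  apply: eq_bigr => k _ /=.
  by rewrite mderivM rmorphD !rmorphM /= mulrDl [_ * _ * rho N q]mulrAC mulrA.
Qed.

Lemma fderiv_rho (g : {mpoly R[M]}) (i : 'I_N) :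
  fderiv i (rho N g) = \sum_(k < M) rho N (dp k.+1 g) * (k.+1%:R * xF i ^+ k).
Proof. by rewrite fderiv_rho_chain; apply: eq_bigr => k _; rewrite rhoX fderiv_psum dpE. Qed.

End Specialization.
Arguments psum {R} N m.

Lemma kernel_sym_expansion (K : fieldType) (a b : K) k : a - b != 0 ->
  a * (a * b / (a - b)) * a ^+ k + b * (b * a / (b - a)) * b ^+ k
  = \sum_(m < k.+1) a ^+ (k - m).+1 * b ^+ m.+1.
Proof.
move=> ab0; have ba0 : b - a != 0 by rewrite -oppr_eq0 opprB.
transitivity (a * b * (a ^+ k.+1 - b ^+ k.+1) / (a - b)).
  by rewrite !exprS; field; rewrite ab0 ba0.
rewrite subrXX /= mulrA mulrAC mulfK // mulr_sumr; apply: eq_bigr => m _.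
by rewrite !exprS; ring.
Qed.

Lemma sum_offdiag_swap (V : nmodType) (I : finType) (G : I -> I -> V) :
  \sum_i \sum_(j | j != i) G i j = \sum_i \sum_(j | j != i) G j i.
Proof.
under eq_bigr do rewrite big_mkcond /=.
rewrite exchange_big /=; apply: eq_bigr => i _.
by rewrite [RHS]big_mkcond /=; apply: eq_bigr => j _; rewrite eq_sym.
Qed.

Section PowerSums.
Variables (R : fieldType) (N : nat).
Local Notation F := (Frac R N).

Lemma sum_offdiag_pow (a b : nat) :
  \sum_(i < N) \sum_(j < N | j != i) (xF i ^+ a * xF j ^+ b : F)
  = psum N a * psum N b - psum N (a + b).
Proof.
rewrite /psum mulr_suml -sumrB; apply: eq_bigr => i _.
by rewrite mulr_sumr [in RHS](bigD1 i) //= -exprD addrC addrK.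
Qed.

Lemma sum_kernel_pow k :
  2 * \sum_(i < N) \sum_(j < N | j != i) xF i * (xF i * xF j / (xF i - xF j)) * xF i ^+ k
  = \sum_(m < k.+1) (psum N (k - m).+1 * psum N m.+1 - psum N k.+2) :> F.
Proof.
rewrite mulr2n mulrDl mul1r {2}sum_offdiag_swap -big_split /=.
transitivity (\sum_(i < N) \sum_(j < N | j != i) \sum_(m < k.+1)
                (xF i ^+ (k - m).+1 * xF j ^+ m.+1 : F)).
  apply: eq_bigr => i _; rewrite -big_split /=; apply: eq_bigr => j ji.
  by apply: kernel_sym_expansion; apply: xF_sub_neq0; rewrite eq_sym.
transitivity (\sum_(m < k.+1) \sum_(i < N) \sum_(j < N | j != i)
                (xF i ^+ (k - m).+1 * xF j ^+ m.+1 : F)).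
  by rewrite exchange_big /=; apply: eq_bigr => i _; rewrite exchange_big.
apply: eq_bigr => m _.
by rewrite sum_offdiag_pow addSn addnS subnK // -ltnS.
Qed.

End PowerSums.

Lemma sum_ord_shift (V : zmodType) (M m : nat) (H : nat -> V) : (m < M)%N ->
  (forall a, (M <= a + m)%N -> H a = 0) ->
  \sum_(k < M) (if (m <= k)%N then H (k - m)%N else 0) = \sum_(a < M) H a.
Proof.
move=> mM H_ge; rewrite -(big_mkord xpredT H).
rewrite -(big_mkord xpredT (fun k => if (m <= k)%N then H (k - m)%N else 0)).
rewrite (big_cat_nat (n := m)) //=; last exact: ltnW.
rewrite big_nat_cond big1 ?add0r; last first.
  by move=> k /andP[/andP[_ km] _]; rewrite leqNgt km.
transitivity (\sum_(m <= k < M) H (k - m)%N).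
  by apply: eq_big_nat => k /andP[mk _]; rewrite mk.
have := big_addn 0 M m xpredT (fun k => H (k - m)%N); rewrite add0n => ->.
under eq_bigr do rewrite addnK.
rewrite [RHS](big_cat_nat (n := (M - m)%N)) //=; last exact: leq_subr.
rewrite [X in _ = _ + X]big_nat_cond [X in _ = _ + X]big1 ?addr0 //.
by move=> a /andP[/andP[Ma _] _]; apply: H_ge; rewrite addnC -leq_subLR.
Qed.

Lemma sum_ord_triangle (V : zmodType) (M : nat) (H : nat -> nat -> V) :
  (forall a b, (M <= a + b)%N -> H a b = 0) ->
  \sum_(k < M) \sum_(m < k.+1) H (k - m)%N m = \sum_(a < M) \sum_(b < M) H a b.
Proof.
move=> H_ge.
transitivity (\sum_(k < M) \sum_(m < M) (if (m <= k)%N then H (k - m)%N m else 0)).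
  apply: eq_bigr => k _.
  rewrite (big_ord_widen M (fun m => H (k - m)%N m) (ltn_ord k)) big_mkcond /=.
  by apply: eq_bigr => m _; rewrite ltnS.
rewrite exchange_big /= [RHS]exchange_big /=; apply: eq_bigr => m _.
exact: (sum_ord_shift (ltn_ord m) (fun a => H_ge a m)).
Qed.

Section SpecializedCommutator.
Variables (R : fieldType) (N M : nat) (g : {mpoly R[M]}).
Local Notation F := (Frac R N).
Local Notation D1 k := (rho N (dp k.+1 g)).
Local Notation D2 k l := (rho N (dp l.+1 (dp k.+1 g))).

Definition shift_term : F := \sum_(k < M) D1 k * (k.+1%:R * k.+1%:R) * psum N k.+2.
Definition join_term : F :=
  \sum_(k < M) \sum_(l < M) D2 k l * k.+1%:R * l.+1%:R * psum N (k + l).+3.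
Definition cut_term : F :=
  \sum_(a < M) \sum_(b < M) D1 (a + b) * (a + b).+1%:R * (psum N a.+1 * psum N b.+1).

Lemma euler2_rho :
  \sum_(i < N) xF i ^+ 2 * fderiv i (rho N g) = \sum_(k < M) D1 k * k.+1%:R * psum N k.+2.
Proof.
under eq_bigr do rewrite fderiv_rho mulr_sumr.
rewrite exchange_big /=; apply: eq_bigr => k _.
rewrite /psum mulr_sumr; apply: eq_bigr => i _.
by move: (xF i) => x; rewrite !exprS; ring.
Qed.

Lemma euler3_rho :
  \sum_(i < N) xF i ^+ 3 * fderiv i (fderiv i (rho N g))
  = join_term + \sum_(k < M) D1 k * k.+1%:R * k%:R * psum N k.+2.
Proof.
under eq_bigr do rewrite fderiv_rho raddf_sum /= mulr_sumr.
rewrite exchange_big /= -big_split /=; apply: eq_bigr => k _.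
under eq_bigr do rewrite fderivM fderiv_rho fderivM fderiv_nat mul0r add0r mulrDr.
rewrite big_split /=; congr (_ + _).
  rewrite /psum; under eq_bigr do rewrite mulr_suml mulr_sumr.
  rewrite exchange_big /=; apply: eq_bigr => l _.
  rewrite mulr_sumr; apply: eq_bigr => i _.
  move: (xF i) => x; rewrite !exprS exprD; ring.
rewrite /psum mulr_sumr; apply: eq_bigr => i _.
have := xF_fderiv_pow R i k; move: (fderiv i _) => d; move: (xF i) => x xd.
transitivity (x ^+ 2 * D1 k * k.+1%:R * (x * d)); first by ring.
by rewrite xd !exprS; ring.
Qed.

Lemma kernel_rho :
  \sum_(i < N) \sum_(j < N | j != i) xF i * (xF i * xF j / (xF i - xF j)) * fderiv i (rho N g)
  = \sum_(k < M) D1 k * k.+1%:R *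
      \sum_(i < N) \sum_(j < N | j != i) xF i * (xF i * xF j / (xF i - xF j)) * xF i ^+ k.
Proof.
transitivity (\sum_(k < M) \sum_(i < N) \sum_(j < N | j != i)
   D1 k * k.+1%:R * (xF i * (xF i * xF j / (xF i - xF j)) * xF i ^+ k)).
  rewrite exchange_big /=; apply: eq_bigr => i _.
  rewrite exchange_big /=; apply: eq_bigr => j _.
  rewrite fderiv_rho mulr_sumr; apply: eq_bigr => k _.
  move: (xF i * xF j / (xF i - xF j)) => w; move: (xF i) => x; ring.
by apply: eq_bigr => k _; rewrite mulr_sumr; apply: eq_bigr => i _; rewrite mulr_sumr.
Qed.

Lemma cut_term_triangular :
  cut_term = \sum_(k < M) D1 k * k.+1%:R * \sum_(m < k.+1) (psum N (k - m).+1 * psum N m.+1).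
Proof.
rewrite /cut_term -(@sum_ord_triangle _ M (fun a b => D1 (a + b) * (a + b).+1%:R * (psum N a.+1 * psum N b.+1))).
  apply: eq_bigr => k _; rewrite mulr_sumr; apply: eq_bigr => m _.
  by rewrite subnK // -ltnS.
by move=> a b ab; rewrite dp_ge // rmorph0 !mul0r.
Qed.

Lemma commDE2_rho (alpha : R) :
  commDE2 alpha (rho N g)
  = cF N (alpha / 2) * (2 * (shift_term + join_term)) + (cut_term - shift_term).
Proof.
rewrite commDE2E big_split /= euler2_rho euler3_rho kernel_rho.
have -> : \sum_(k < M) D1 k * k.+1%:R * psum N k.+2
          + (join_term + \sum_(k < M) D1 k * k.+1%:R * k%:R * psum N k.+2)
          = shift_term + join_term.
  rewrite addrCA addrC /shift_term -big_split; congr (_ + _); apply: eq_bigr => k _ /=.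
  by rewrite [k.+1%:R in RHS]mulrSr; ring.
congr (_ + _).
rewrite cut_term_triangular /shift_term -sumrB mulr_sumr; apply: eq_bigr => k _.
rewrite mulrCA sum_kernel_pow sumrB sumr_const card_ord -mulr_natl; ring.
Qed.

End SpecializedCommutator.

Section RhsTerms.
Variables (R : fieldType) (N M : nat) (g : {mpoly R[M]}).
Local Notation F := (Frac R N).
Local Notation D1 k := (rho N (dp k.+1 g)).
Local Notation D2 k l := (rho N (dp l.+1 (dp k.+1 g))).

Lemma rho_pp k : (k < M)%N -> rho N (pp R M k.+1) = psum N k.+1.
Proof. by move=> kM; rewrite -[k]/(val (Ordinal kM)) ppE rhoX. Qed.

Lemma rho_natZ k (p : {mpoly R[M]}) : rho N (k%:R *: p) = k%:R * rho N p.
Proof. by rewrite rhoZ rmorph_nat. Qed.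

Lemma rho_rhs_cut :
  \sum_(1 <= i < M.+1) \sum_(1 <= j < M.+1)
     rho N ((i + j - 1)%:R *: (pp R M i * pp R M j * dp (i + j - 1) g)) = cut_term N g.
Proof.
rewrite /cut_term big_add1 /= big_mkord; apply: eq_bigr => a _.
rewrite big_add1 /= big_mkord; apply: eq_bigr => b _.
rewrite addSn addnS subn1 /= rho_natZ !rmorphM /= !rho_pp //; ring.
Qed.

Lemma rho_rhs_join : (forall a b, (M <= (a + b).+2)%N -> D2 b a = 0) ->
  \sum_(1 <= i < M.+1) \sum_(1 <= j < M.+1)
     rho N ((i * j)%:R *: (pp R M (i + j + 1) * dp i (dp j g))) = join_term N g.
Proof.
move=> D2_ge.
rewrite /join_term [RHS]exchange_big big_add1 [M.+1.-1]/= big_mkord; apply: eq_bigr => a _.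
rewrite big_add1 [M.+1.-1]/= big_mkord; apply: eq_bigr => b _.
rewrite addn1 addSn addnS rho_natZ rmorphM /=.
have [abM|abM] := ltnP (a + b).+2 M; last by rewrite D2_ge // !mulr0 !mul0r.
by rewrite rho_pp // (addnC b a) natrM; ring.
Qed.

Lemma rho_rhs_shift : (0 < M)%N -> D1 M.-1 = 0 ->
  \sum_(1 <= i < M.+1) rho N (((i - 1) ^ 2)%:R *: (pp R M i * dp (i - 1) g)) = shift_term N g.
Proof.
move=> M0 D1_last.
rewrite big_add1 [M.+1.-1]/= (big_ltn M0) subnn mulr0 scaler0 rmorph0 add0r big_add1.
rewrite /shift_term -(big_mkord xpredT (fun k => D1 k * (k.+1%:R * k.+1%:R) * psum N k.+2)).
rewrite [RHS](big_cat_nat (n := M.-1)) ?leq_pred //=.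
rewrite [X in _ = _ + X](big_ltn (n := M)) ?prednK // [X in _ + (_ + X)]big_geq //.
rewrite D1_last !mul0r !addr0; apply: eq_big_nat => k /andP[_ kM].
have kM' : (k.+1 < M)%N by rewrite -ltn_predRL.
by rewrite subn1 /= rho_natZ rmorphM /= rho_pp // natrX; ring.
Qed.

End RhsTerms.

Theorem mainTheorem8 (R : fieldType) (hR : [pchar R] =i pred0) (alpha : R)
    (n N : nat) (f : {mpoly R[n]}) :
  commDE2 alpha (rho N (emb (2 * n + 1)%N f))
  = rho N (rhsOp alpha (emb (2 * n + 1)%N f)).
Proof.
set M := (2 * n + 1)%N; set g := emb M f.
have half2 : cF N (alpha / 2) * 2 = cF N alpha.
  have two : (2 : R) != 0 by move/pcharf0P: hR => ->.
  by rewrite -(rmorph_nat (@cF R N)) -rmorphM /= divfK.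
have M0 : (0 < M)%N by rewrite /M addn1.
have D1_last : rho N (dp M.-1.+1 g) = 0.
  by rewrite /g dp_emb_ge ?rmorph0 //; rewrite /M addn1 /=; lia.
have D2_ge a b : (M <= (a + b).+2)%N -> rho N (dp a.+1 (dp b.+1 g)) = 0.
  move=> abM; have [nb|bn] := leqP n b; first by rewrite /g dp_emb_ge // dp0 rmorph0.
  by rewrite dp_comm /g dp_emb_ge ?dp0 ?rmorph0 //; move: abM; rewrite /M; lia.
rewrite commDE2_rho /rhsOp !rmorphD /= !rhoZ !rmorph_sum.
under [X in _ = _ + X + _]eq_bigr do rewrite rmorph_sum.
under [X in _ = _ + _ + _ * X]eq_bigr do rewrite rmorph_sum.
rewrite rho_rhs_shift // rho_rhs_cut rho_rhs_join // mulrA half2 rmorphB rmorph1 /=.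
ring.
Qed.
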